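(* Let $\mathcal G=\prod_{i=1}^n\mathcal G^i:\prod_i[k_i]\to\mathbb{R}^n$ be a grid with controlling constant $c$ and let $\delta<c/2$. Then $\mathsf M^{\mathcal G}_\delta$ is a well-defined endofunctor of the category of finitely presented $n$-parameter persistence modules: the module $\mathsf M^{\mathcal G}_\delta(M)$ does not depend (up to isomorphism) on the chosen presentation of $M$, and the induced morphism $\mathsf M^{\mathcal G}_\delta(f)$ is well defined for every morphism $f$.
   Context: Modules are $\mathbb{R}^n$-graded modules over $P_n$ (monoid ring over a field of $([0,\infty)^n,+)$, monomials $\vec x^{\vec a}$); a finitely presented module has a presentation $F_1\xrightarrow{p_1}F_0\to M\to0$ with $F_0=\mathrm{Free}[\{\vec b_i\}]$, $F_1=\mathrm{Free}[\{\vec r_l\}]$ finitely generated free. A grid is $\mathcal G=\prod_i\mathcal G^i$ with $\mathcal G^i:[k_i]\to\mathbb{R}$; its controlling constant is $c(\mathcal G)=\min\{\|\vec a-\vec b\|_\infty:\vec a\ne\vec b\in\mathrm{Im}\,\mathcal G\}$. For $\delta<c/2$, the merge function $\mathsf M^{\mathcal G}_\delta:\mathbb{R}^n\to\mathbb{R}^n$ acts coordinatewise by $x\mapsto\mathcal G^i(k)$ if $x\in[\mathcal G^i(k)-\delta,\mathcal G^i(k)+\delta]$ for some $k$, and $x\mapsto x$ otherwise; it is order preserving. On free modules, $\mathsf M^{\mathcal G}_\delta(\mathrm{Free}[\mathcal X])=\mathrm{Free}[\mathsf M^{\mathcal G}_\delta(\mathcal X)]$ (same generators, grades replaced by their merges),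 and a morphism $\vec b\mapsto\sum_j c_j\vec x^{\vec b-\vec b'_j}\vec b'_j$ is sent to $\mathsf M(\vec b)\mapsto\sum_jc_j\vec x^{\mathsf M(\vec b)-\mathsf M(\vec b'_j)}\mathsf M(\vec b'_j)$. For $M$ with presentation $F_1\to F_0\to M$, $\mathsf M^{\mathcal G}_\delta(M)=\mathrm{coker}\,\mathsf M^{\mathcal G}_\delta(F_1\to F_0)$. For $f:M\to N$, choose a lift $f_0:F_0\to G_0$ to presentations, and set $\mathsf M^{\mathcal G}_\delta(f)$ to be the morphism of cokernels induced by $\mathsf M^{\mathcal G}_\delta(f_0)$. *)

From HB Require Import structures.
From mathcomp Require Import all_boot all_order all_algebra.
From mathcomp Require Import reals.
Set Implicit Arguments. Unset Strict Implicit. Unset Printing Implicit Defensive.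
Import Order.TTheory GRing.Theory Num.Theory.
Local Open Scope ring_scope.

Section Grades.
Variables (R : realType) (n : nat).

Definition grade := 'I_n -> R.

Definition leg (a b : grade) : bool := [forall i, a i <= b i].

Definition dist_inf (a b : grade) : R := \big[Num.max/0]_(i < n) `|a i - b i|.

Variables (kk : 'I_n -> nat) (G : forall i : 'I_n, 'I_(kk i) -> R).

Definition gpt (u : forall i : 'I_n, 'I_(kk i)) : grade := fun i => G (u i).

Definition is_ctrl_const (c : R) : Prop :=
  (exists u v, gpt u <> gpt v /\ dist_inf (gpt u) (gpt v) = c) /\
  (forall u v, gpt u <> gpt v -> c <= dist_inf (gpt u) (gpt v)).

(* the hypothesis delta < c(G)/2 (vacuous when Im G has fewer than two points,
   i.e. when the minimum is over the empty set, c = +oo) *)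
Definition delta_lt_half_ctrl (d : R) : Prop :=
  forall c, is_ctrl_const c -> d < c / 2.

Definition merge (d : R) (a : grade) : grade := fun i =>
  match [pick k : 'I_(kk i) | (G k - d <= a i) && (a i <= G k + d)] with
  | Some k => G k
  | None => a i
  end.

End Grades.

Section Modules.
Variables (K : fieldType) (R : realType) (n : nat).
Local Notation grade := (grade R n).
Local Notation leg := (@leg R n).

(* An R^n-graded module over P_n: graded pieces V a (K-vector spaces) and
   the action of monomials x^(b-a) : V a -> V b for a <= b
   (tr is only meaningful when leg a b). *)
Record pmod := PMod {
  V :> grade -> lmodType K;
  tr : forall a b : grade, V a -> V b
}.

Definition is_pmod (M : pmod) : Prop :=
  (forall a b, leg a b -> linear (@tr M a b)) /\
  (forall a x, @tr M a a x = x) /\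
  (forall a b c, leg a b -> leg b c -> forall x,
      @tr M b c (@tr M a b x) = @tr M a c x).

Definition is_morph (M N : pmod) (f : forall a, M a -> N a) : Prop :=
  (forall a, linear (f a)) /\
  (forall a b, leg a b -> forall x, f b (@tr M a b x) = @tr N a b (f a x)).

Definition is_iso (M N : pmod) (f : forall a, M a -> N a) : Prop :=
  is_morph f /\ exists g : forall a, N a -> M a,
    [/\ is_morph g, (forall a x, g a (f a x) = x) & (forall a y, f a (g a y) = y)].

Definition pmod_iso (M N : pmod) : Prop := exists f, @is_iso M N f.

(* A presentation F1 --p1--> F0 of free modules, F0 = Free[{gen i}],
   F1 = Free[{rel l}], p1 (rel l) = sum_i pmx l i x^(rel l - gen i) (gen i). *)
Record pres := Pres {
  ng : nat; nr : nat;
  gen : 'I_ng -> grade;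
  rel : 'I_nr -> grade;
  pmx : 'M[K]_(nr, ng)
}.
Arguments ng : clear implicits. Arguments nr : clear implicits.
Arguments gen : clear implicits. Arguments rel : clear implicits.
Arguments pmx : clear implicits.

(* a morphism Free[{b_i}] -> Free[{b'_j}], b_i |-> sum_j c i j x^(b_i-b'_j) b'_j,
   is given by its coefficient matrix c, which must satisfy
   c i j <> 0 -> b'_j <= b_i (row-vector convention: x |-> x *m c) *)
Definition graded_mx m1 m2 (b : 'I_m1 -> grade) (b' : 'I_m2 -> grade)
  (c : 'M[K]_(m1, m2)) : Prop :=
  forall i j, c i j != 0 -> leg (b' j) (b i).

Definition graded_pres (P : pres) : Prop := graded_mx (rel P) (gen P) (pmx P).

(* degree-a part of F0 = Free[{gen i}], inside K^(ng): span of the generators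
   of grade <= a (x^(a - gen i) gen i is identified with the i-th basis row) *)
Definition Fsp (P : pres) (a : grade) : {vspace 'rV[K]_(ng P)} :=
  <<[seq (delta_mx ord0 i : 'rV[K]_(ng P)) | i <- enum 'I_(ng P) & leg (gen P i) a]>>%VS.

Definition Rsp (P : pres) (a : grade) : {vspace 'rV[K]_(ng P)} :=
  <<[seq row l (pmx P) | l <- enum 'I_(nr P) & leg (rel P l) a]>>%VS.

(* the quotient (F0)_a / im(p1)_a, realised as a complement of im(p1)_a in (F0)_a *)
Definition Csp (P : pres) (a : grade) : {vspace 'rV[K]_(ng P)} :=
  (Fsp P a :\: Rsp P a)%VS.

Definition qmap (P : pres) (a : grade) (x : 'rV[K]_(ng P)) : subvs_of (Csp P a) :=
  vsproj (Csp P a) (addv_pi1 (Fsp P a) (Rsp P a) x).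

Definition coker (P : pres) : pmod :=
  @PMod (fun a => subvs_of (Csp P a)) (fun a b x => @qmap P b (vsval x)).

Definition presents (P : pres) (M : pmod) (alpha : forall a, coker P a -> M a) : Prop :=
  graded_pres P /\ @is_iso (coker P) M alpha.

Definition is_lift (P Q : pres) (M N : pmod)
  (alpha : forall a, coker P a -> M a) (beta : forall a, coker Q a -> N a)
  (f : forall a, M a -> N a) (c : 'M[K]_(ng P, ng Q)) : Prop :=
  graded_mx (gen P) (gen Q) c /\
  forall a (x : 'rV[K]_(ng P)), x \in Fsp P a ->
    f a (alpha a (@qmap P a x)) = beta a (@qmap Q a (x *m c)).

Definition ind (P Q : pres) (c : 'M[K]_(ng P, ng Q)) :
  forall a, coker P a -> coker Q a :=
  fun a y => @qmap Q a (vsval y *m c).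

Definition induces (P Q : pres) (c : 'M[K]_(ng P, ng Q)) : Prop :=
  (forall a x, x \in Fsp P a -> ind c (@qmap P a x) = @qmap Q a (x *m c)) /\
  is_morph (ind c).


End Modules.

Arguments gen {K R n} p _. Arguments rel {K R n} p _. Arguments pmx {K R n} p.
Arguments ng {K R n} p. Arguments nr {K R n} p.
Arguments tr {K R n} p a b _.
Arguments qmap {K R n} P a x.
Arguments ind {K R n} P Q c a _.
Arguments is_morph {K R n} M N f.
Arguments is_iso {K R n} M N f.
Arguments is_lift {K R n} P Q M N alpha beta f c.
Arguments induces {K R n} P Q c.
Arguments presents {K R n} P M alpha.
Arguments merge {R n kk} G d a _.

Definition mpres (K : fieldType) (R : realType) (n : nat) (kk : 'I_n -> nat)
  (G : forall i : 'I_n, 'I_(kk i) -> R) (d : R) (P : pres K R n) : pres K R n :=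
  @Pres K R n (ng P) (nr P) (fun i => merge G d (gen P i))
    (fun l => merge G d (rel P l)) (pmx P).

(* The hypothesis delta < c/2 makes the merge function order preserving: the
   delta-windows around distinct grid values of one coordinate are disjoint.
   Monotonicity is all that is needed.  Merging keeps graded matrices graded
   and moves the relations of degree b into degree merge b.  A lift c of
   f : M -> N to presentations sends relations into relations, and two lifts
   differ by a matrix sending generators into relations; both properties
   survive merging.  Hence every lift induces a morphism of merged cokernels,
   independent of the lift and compatible with identities and composition;
   lifts of id_M in both directions between two presentations of M then give
   mutually inverse isomorphisms. *)

From HB Require Import structures.
From mathcomp Require Import all_boot all_order all_algebra.
From mathcomp Require Import reals.
From mathcomp Require Import lra.
From Stdlib Require Import FunctionalExtensionality.
Import Order.TTheory GRing.Theory Num.Theory.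
Local Open Scope ring_scope.
Set Implicit Arguments. Unset Strict Implicit. Unset Printing Implicit Defensive.

Section Grades.
Variables (R : realType) (n : nat).
Implicit Types a b c : grade R n.

Lemma leg_refl a : leg a a.
Proof. exact/forallP. Qed.

Lemma leg_trans b a c : leg a b -> leg b c -> leg a c.
Proof.
by move=> /forallP ab /forallP bc; apply/forallP => i; apply: le_trans (ab i) (bc i).
Qed.

End Grades.

Section MergeMonotone.
Variables (R : realType) (n : nat) (kk : 'I_n -> nat) (G : forall i, 'I_(kk i) -> R).

Lemma ctrl_const_exists (u v : forall i, 'I_(kk i)) :
  gpt G u <> gpt G v -> exists c, is_ctrl_const G c.
Proof.
pose T := {dffun forall i, 'I_(kk i)}.
pose pt (w : T) := gpt G (fun i => w i).
have ptE w : pt (finfun w) = gpt G w.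
  by apply: functional_extensionality => i; rewrite /pt /gpt ffunE.
have distinctP (w w' : T) : reflect (pt w <> pt w') [exists i, pt w i != pt w' i].
  apply: (iffP idP) => [/existsP [i /eqP wi] E | neq]; first by rewrite E in wi.
  apply: contra_notT neq => /existsPn eq.
  by apply: functional_extensionality => i; apply/eqP/negPn.
move=> uv; pose uv0 : T * T := (finfun u, finfun v).
have [|[w w'] /= /distinctP ww' w_min] := @arg_minP _ _ _ uv0
  (fun p => [exists i, pt p.1 i != pt p.2 i]) (fun p => dist_inf (pt p.1) (pt p.2)).
  by apply/distinctP; rewrite !ptE.
exists (dist_inf (pt w) (pt w')); split; first by exists (fun i => w i), (fun i => w' i).
move=> u' v' uv'; rewrite -!ptE; apply: (w_min (finfun u' : T, finfun v' : T)).
by apply/distinctP; rewrite !ptE.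
Qed.

Variable d : R.
Hypotheses (kk_gt0 : forall i, (0 < kk i)%N) (d_lt_half : delta_lt_half_ctrl G d).

(* Two grid points differing only in coordinate [i] are at sup-distance
   [G k - G k'], which is at least the controlling constant [c > 2 d]. *)
Lemma grid_gap i (k k' : 'I_(kk i)) : G k' < G k -> d + d < G k - G k'.
Proof.
move=> k'k; pose at_i (l : 'I_(kk i)) j : 'I_(kk j) :=
  if j == i then insubd (Ordinal (kk_gt0 j)) (val l) else Ordinal (kk_gt0 j).
have at_iE l : gpt G (at_i l) i = G l.
  by rewrite /gpt /at_i eqxx; congr (G _); apply: val_inj; rewrite val_insubd ltn_ord.
have neq : gpt G (at_i k) <> gpt G (at_i k').
  by move=> /(congr1 (fun g => g i)); rewrite !at_iE => E; rewrite E ltxx in k'k.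
have [c c_ctrl] := ctrl_const_exists neq.
have dist_le : dist_inf (gpt G (at_i k)) (gpt G (at_i k')) <= G k - G k'.
  apply: (big_ind (fun x => x <= G k - G k')) => [||j _].
  - by rewrite subr_ge0 ltW.
  - by move=> x y; rewrite ge_max => -> ->.
  case: (eqVneq j i) => [->|ji]; first by rewrite !at_iE gtr0_norm ?subr_gt0.
  by rewrite /gpt /at_i (negbTE ji) subrr normr0 subr_ge0 ltW.
have := d_lt_half c_ctrl; have := c_ctrl.2 _ _ neq; lra.
Qed.

Lemma leg_merge (a b : grade R n) : leg a b -> leg (merge G d a) (merge G d b).
Proof.
move=> /forallP ab; apply/forallP => i; move: (ab i); rewrite /merge.
case: pickP => [k /andP [ak1 ak2]|a_out]; case: pickP => [k' /andP [bk1 bk2]|b_out] //.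
- by move=> abi; rewrite leNgt; apply/negP => /grid_gap; lra.
- by move: (b_out k) => /negbT; rewrite negb_and -!ltNge => /orP [] ? ?; lra.
- by move: (a_out k') => /negbT; rewrite negb_and -!ltNge => /orP [] ? ?; lra.
Qed.

End MergeMonotone.

Section LinearMaps.
Variable K : fieldType.

Lemma linear_comp (U V W : lmodType K) (g : V -> W) (h : U -> V) :
  linear g -> linear h -> linear (g \o h).
Proof. by move=> lin_g lin_h k x y /=; rewrite lin_h lin_g. Qed.

Lemma linear_row_ext (V : lmodType K) m (h1 h2 : 'rV[K]_m -> V) (x : 'rV[K]_m) :
  linear h1 -> linear h2 ->
  (forall j, x 0 j != 0 -> h1 'e_j = h2 'e_j) -> h1 x = h2 x.
Proof.
move=> lin1 lin2 e12.
pose h1L : {linear _ -> V} := HB.pack h1 (GRing.isLinear.Build K _ V *:%R h1 lin1).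
pose h2L : {linear _ -> V} := HB.pack h2 (GRing.isLinear.Build K _ V *:%R h2 lin2).
rewrite -[h1]/(h1L : _ -> _) -[h2]/(h2L : _ -> _) [x]row_sum_delta !linear_sum.
apply: eq_bigr => j _; rewrite !linearZ /=.
by have [->|/e12 ->] := eqVneq (x 0 j) 0; rewrite ?scale0r.
Qed.

Lemma memv_span_mulmx m p (s : seq 'rV[K]_m) (c : 'M[K]_(m, p))
    (W : {vspace 'rV[K]_p}) z :
  {in s, forall v, v *m c \in W} -> z \in <<s>>%VS -> z *m c \in W.
Proof.
move=> sW /(coord_span (X := in_tuple s)) ->; rewrite mulmx_suml.
by apply: memv_suml => i _; rewrite -scalemxAl memvZ // sW // mem_nth.
Qed.

End LinearMaps.

Section Presentations.
Variables (K : fieldType) (R : realType) (n : nat).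
Implicit Types (P Q S : pres K R n) (a b : grade R n).

Lemma delta_memFsp P a i : leg (gen P i) a -> 'e_i \in Fsp P a.
Proof.
by move=> ia; apply: memv_span; apply/mapP; exists i; rewrite // mem_filter ia mem_enum.
Qed.

Lemma memFspP P a (x : 'rV[K]_(ng P)) :
  reflect (forall j, x 0 j != 0 -> leg (gen P j) a) (x \in Fsp P a).
Proof.
apply: (iffP idP) => [xF j | x_gen].
  apply: contraR => ja.
  (* Projecting onto coordinate [j] kills all spanning vectors but ['e_j]. *)
  pose W : {vspace 'rV[K]_1} := if leg (gen P j) a then fullv else 0%VS.
  suff: x *m delta_mx j 0 \in W.
    rewrite /W (negbTE ja) memv0 -colE => /eqP.
    by move=> /(congr1 (fun v : 'cV[K]_1 => v 0 0)); rewrite !mxE => ->.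
  apply: (memv_span_mulmx _ xF) => v /mapP [i]; rewrite mem_filter => /andP [ia _] ->.
  rewrite mul_delta_mx_cond.
  by rewrite /W; have [<-|_] := eqVneq i j; rewrite ?ia ?memvf ?mulr0n ?mem0v.
rewrite [x]row_sum_delta; apply: memv_suml => j _.
by have [->|/x_gen/delta_memFsp Fj] := eqVneq (x 0 j) 0; [rewrite scale0r mem0v | apply: memvZ].
Qed.

Lemma FspS P a b : leg a b -> (Fsp P a <= Fsp P b)%VS.
Proof.
move=> ab; apply/span_subvP => v /mapP [i]; rewrite mem_filter => /andP [ia _] ->.
exact/delta_memFsp/(leg_trans ia).
Qed.

Lemma row_memRsp P a l : leg (rel P l) a -> row l (pmx P) \in Rsp P a.
Proof.
by move=> la; apply: memv_span; apply/mapP; exists l; rewrite // mem_filter la mem_enum.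
Qed.

Lemma RspS P a b : leg a b -> (Rsp P a <= Rsp P b)%VS.
Proof.
move=> ab; apply/span_subvP => v /mapP [l]; rewrite mem_filter => /andP [la _] ->.
exact/row_memRsp/(leg_trans la).
Qed.

Lemma row_memFsp P l : graded_pres P -> row l (pmx P) \in Fsp P (rel P l).
Proof. by move=> P_gr; apply/memFspP => j; rewrite mxE; apply: P_gr. Qed.

Lemma vsval_memFsp P a (y : coker P a) : vsval y \in Fsp P a.
Proof. exact: subvP (diffvSl _ _) _ (subvsP y). Qed.

Lemma graded_mx_mulmx P Q c a x :
  graded_mx (gen P) (gen Q) c -> x \in Fsp P a -> x *m c \in Fsp Q a.
Proof.
move=> c_gr; apply: memv_span_mulmx => v /mapP [i]; rewrite mem_filter => /andP [ia _] ->.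
by apply/memFspP => j; rewrite -rowE mxE => /c_gr /leg_trans; apply.
Qed.

Lemma graded_mx1 m (b : 'I_m -> grade R n) : graded_mx b b (1%:M : 'M[K]_m).
Proof. by move=> i j; rewrite mxE; have [->|_] := eqVneq i j; rewrite ?leg_refl ?eqxx. Qed.

Lemma graded_mx_mul m1 m2 m3 (b1 : 'I_m1 -> grade R n) (b2 : 'I_m2 -> grade R n)
    (b3 : 'I_m3 -> grade R n) (c1 : 'M[K]_(m1, m2)) (c2 : 'M[K]_(m2, m3)) :
  graded_mx b1 b2 c1 -> graded_mx b2 b3 c2 -> graded_mx b1 b3 (c1 *m c2).
Proof.
move=> c1_gr c2_gr i k; rewrite mxE => sum_neq0.
have [j] : exists j, c1 i j * c2 j k != 0.
  apply/existsP; apply: contraR sum_neq0 => /existsPn c_eq0.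
  by rewrite big1 // => j _; apply/eqP/negPn/c_eq0.
by rewrite mulf_eq0 negb_or => /andP [/c1_gr ij /c2_gr jk]; apply: leg_trans jk ij.
Qed.

Lemma qmap_linear P a : linear (qmap P a).
Proof. by move=> k x y; rewrite /qmap !linearP. Qed.

Lemma qmap_vsval P a (y : coker P a) : qmap P a (vsval y) = y.
Proof. by rewrite /qmap (daddv_pi_id (capv_diff _ _) (subvsP y)) vsvalK. Qed.

Lemma qmap_eq P a x x' : x - x' \in Rsp P a -> qmap P a x = qmap P a x'.
Proof.
rewrite -[x](subrK x'); move: (x - x') => y; rewrite addrK => yR; rewrite /qmap !linearD /=.
have := addv_pi1_pi2 (subvP (addvSr (Fsp P a) _) _ yR).
by rewrite addv_pi2_id // => /(canRL (addrK _)); rewrite subrr => ->; rewrite linear0 add0r.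
Qed.

Lemma qmap_sub P a x : x \in Fsp P a -> vsval (qmap P a x) - x \in Rsp P a.
Proof.
move=> xF; rewrite /qmap vsprojK ?memv_pi //.
have := addv_pi1_pi2 (subvP (addvSl _ (Rsp P a)) _ xF).
by move=> {2}<-; rewrite opprD addrA subrr add0r memvN memv_pi2.
Qed.

Lemma qmap_inj P a x x' : x \in Fsp P a -> x' \in Fsp P a ->
  qmap P a x = qmap P a x' -> x - x' \in Rsp P a.
Proof.
move=> xF x'F qxx'; have := memvB (qmap_sub x'F) (qmap_sub xF).
by rewrite qxx' opprB addrC addrA subrK.
Qed.

Lemma coker_tr_qmap P a b x : leg a b -> x \in Fsp P a ->
  tr (coker P) a b (qmap P a x) = qmap P b x.
Proof. by move=> ab xF; apply: qmap_eq; apply: subvP (RspS P ab) _ (qmap_sub xF). Qed.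

Definition maps_rel P Q (c : 'M[K]_(ng P, ng Q)) : Prop :=
  forall l, row l (pmx P) *m c \in Rsp Q (rel P l).
Arguments maps_rel : clear implicits.

(* [h] induces the zero map [coker P -> coker Q]. *)
Definition coker_null P Q (h : 'M[K]_(ng P, ng Q)) : Prop :=
  forall i, 'e_i *m h \in Rsp Q (gen P i).
Arguments coker_null : clear implicits.

Lemma maps_rel_mulmx P Q c a z : maps_rel P Q c -> z \in Rsp P a -> z *m c \in Rsp Q a.
Proof.
move=> c_rel; apply: memv_span_mulmx => v /mapP [l]; rewrite mem_filter => /andP [la _] ->.
exact: subvP (RspS Q la) _ (c_rel l).
Qed.

Lemma coker_null_mulmx P Q h a z : coker_null P Q h -> z \in Fsp P a -> z *m h \in Rsp Q a.
Proof.
move=> h_null; apply: memv_span_mulmx => v /mapP [i]; rewrite mem_filter => /andP [ia _] ->.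
exact: subvP (RspS Q ia) _ (h_null i).
Qed.

Lemma ind_qmap P Q c a x : maps_rel P Q c -> x \in Fsp P a ->
  ind P Q c a (qmap P a x) = qmap Q a (x *m c).
Proof.
by move=> c_rel xF; apply: qmap_eq; rewrite -mulmxBl maps_rel_mulmx // qmap_sub.
Qed.

Lemma induces_maps_rel P Q c :
  graded_mx (gen P) (gen Q) c -> maps_rel P Q c -> induces P Q c.
Proof.
move=> c_gr c_rel; split=> [a x|]; first exact: ind_qmap.
split=> [a k y z | a b ab y]; first by rewrite /ind linearP mulmxDl -scalemxAl qmap_linear.
rewrite [LHS]/= ind_qmap ?(subvP (FspS P ab) _ (vsval_memFsp y)) //.
by rewrite -(coker_tr_qmap ab) // graded_mx_mulmx // vsval_memFsp.
Qed.

Lemma ind_coker_null P Q c c' a y :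
  coker_null P Q (c - c') -> ind P Q c a y = ind P Q c' a y.
Proof. by move=> cc'_null; apply: qmap_eq; rewrite -mulmxBr coker_null_mulmx ?vsval_memFsp. Qed.

Lemma ind_mul P Q S c e a y : graded_mx (gen P) (gen Q) c -> maps_rel Q S e ->
  ind P S (c *m e) a y = ind Q S e a (ind P Q c a y).
Proof.
move=> c_gr e_rel; rewrite -[ind P Q c a y]/(qmap Q a (vsval y *m c)).
by rewrite ind_qmap ?graded_mx_mulmx ?vsval_memFsp // /ind mulmxA.
Qed.

Lemma ind1 P a y : ind P P 1%:M a y = y.
Proof. by rewrite /ind mulmx1 qmap_vsval. Qed.

End Presentations.

Arguments maps_rel {K R n} P Q c.
Arguments coker_null {K R n} P Q h.

Section Lifts.
Variables (K : fieldType) (R : realType) (n : nat).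

Lemma is_iso_inj (M N : pmod K R n) h a : is_iso M N h -> injective (h a).
Proof. by case=> _ [h' [_ hK _]] x y /(congr1 (h' a)); rewrite !hK. Qed.

Lemma is_morph_id (M : pmod K R n) : is_morph M M (fun a x => x).
Proof. by []. Qed.

Lemma lift1 (M : pmod K R n) P (alpha : forall a, coker P a -> M a) :
  is_lift P P M M alpha alpha (fun a x => x) 1%:M.
Proof. by split=> [|a x _]; [exact: graded_mx1 | rewrite mulmx1]. Qed.

Lemma lift_comp (M N L : pmod K R n) P Q S (alpha : forall a, coker P a -> M a)
    (beta : forall a, coker Q a -> N a) (gamma : forall a, coker S a -> L a)
    (f : forall a, M a -> N a) (g : forall a, N a -> L a) c e :
  is_lift P Q M N alpha beta f c -> is_lift Q S N L beta gamma g e ->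
  is_lift P S M L alpha gamma (fun a x => g a (f a x)) (c *m e).
Proof.
move=> [c_gr c_lift] [e_gr e_lift].
split=> [|a x xF]; first exact: graded_mx_mul c_gr e_gr.
by rewrite c_lift // e_lift ?mulmxA // graded_mx_mulmx.
Qed.

Variables (M N : pmod K R n) (P Q : pres K R n).
Unset Implicit Arguments.
Variables (alpha : forall a, coker P a -> M a) (beta : forall a, coker Q a -> N a).
Variable f : forall a, M a -> N a.
Set Implicit Arguments.
Hypothesis beta_iso : is_iso (coker Q) N beta.

Lemma lift_qmap_diff c c' a x x' :
  is_lift P Q M N alpha beta f c -> is_lift P Q M N alpha beta f c' ->
  x \in Fsp P a -> x' \in Fsp P a -> qmap P a x = qmap P a x' ->
  x *m c - x' *m c' \in Rsp Q a.
Proof.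
move=> [c_gr c_lift] [c'_gr c'_lift] xF x'F qxx'.
apply: qmap_inj; rewrite ?graded_mx_mulmx //.
by apply: (is_iso_inj beta_iso); rewrite -c_lift // -c'_lift // qxx'.
Qed.

Lemma lift_maps_rel c :
  graded_pres P -> is_lift P Q M N alpha beta f c -> maps_rel P Q c.
Proof.
move=> P_gr c_lift l; rewrite -[_ *m c]subr0 -(mul0mx _ c).
apply: lift_qmap_diff; rewrite ?mem0v ?row_memFsp //.
by apply: qmap_eq; rewrite subr0 row_memRsp ?leg_refl.
Qed.

Lemma lift_diff_coker_null c c' :
  is_lift P Q M N alpha beta f c -> is_lift P Q M N alpha beta f c' ->
  coker_null P Q (c - c').
Proof.
by move=> c_lift c'_lift i; rewrite mulmxBr lift_qmap_diff ?delta_memFsp ?leg_refl.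
Qed.

Hypotheses (alpha_morph : is_morph (coker P) M alpha) (f_morph : is_morph M N f).

Lemma lift_exists : exists c, is_lift P Q M N alpha beta f c.
Proof.
have [beta_morph [beta' [_ _ betaK']]] := beta_iso.
pose lift_gen i : coker Q (gen P i) := beta' _ (f _ (alpha _ (qmap P (gen P i) 'e_i))).
exists (\matrix_i vsval (lift_gen i)); split=> [i j|a x /memFspP x_gen].
  by rewrite mxE; move/memFspP: (vsval_memFsp (lift_gen i)); apply.
apply: (@linear_row_ext _ _ _ (f a \o alpha a \o qmap P a) (beta a \o qmap Q a \o mulmxr _)).
- apply: linear_comp; last exact: qmap_linear.
  by apply: linear_comp; [exact: f_morph.1 | exact: alpha_morph.1].
- apply: linear_comp; last exact: linearP.
  by apply: linear_comp; [exact: beta_morph.1 | exact: qmap_linear].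
move=> j /x_gen ja /=.
rewrite -(coker_tr_qmap ja (delta_memFsp (leg_refl _))) alpha_morph.2 // f_morph.2 //.
by rewrite -[f _ _](betaK' (gen P j)) -beta_morph.2 //= -rowE rowK.
Qed.

End Lifts.

Section MergeFunctor.
Variables (K : fieldType) (R : realType) (n : nat) (kk : 'I_n -> nat)
  (G : forall i, 'I_(kk i) -> R) (d : R).
Hypotheses (kk_gt0 : forall i, (0 < kk i)%N) (d_lt_half : delta_lt_half_ctrl G d).
Local Notation mp := (mpres G d).

Lemma graded_mx_merge m1 m2 (b1 : 'I_m1 -> grade R n) (b2 : 'I_m2 -> grade R n)
    (c : 'M[K]_(m1, m2)) :
  graded_mx b1 b2 c -> graded_mx (fun i => merge G d (b1 i)) (fun j => merge G d (b2 j)) c.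
Proof. by move=> c_gr i j /c_gr; apply: leg_merge. Qed.

Lemma Rsp_merge (Q : pres K R n) b : (Rsp Q b <= Rsp (mp Q) (merge G d b))%VS.
Proof.
apply/span_subvP => v /mapP [l]; rewrite mem_filter => /andP [lb _] ->.
exact: (@row_memRsp _ _ _ (mp Q)) (leg_merge kk_gt0 d_lt_half lb).
Qed.

Lemma maps_rel_merge P Q (c : 'M[K]_(ng P, ng Q)) :
  maps_rel P Q c -> maps_rel (mp P) (mp Q) c.
Proof. by move=> c_rel l; apply: subvP (Rsp_merge Q _) _ (c_rel l). Qed.

Lemma coker_null_merge P Q (h : 'M[K]_(ng P, ng Q)) :
  coker_null P Q h -> coker_null (mp P) (mp Q) h.
Proof. by move=> h_null i; apply: subvP (Rsp_merge Q _) _ (h_null i). Qed.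

Section MergeLift.
Variables (M N : pmod K R n) (P Q : pres K R n).
Unset Implicit Arguments.
Variables (alpha : forall a, coker P a -> M a) (beta : forall a, coker Q a -> N a).
Variable f : forall a, M a -> N a.
Set Implicit Arguments.
Hypotheses (P_gr : graded_pres P) (beta_iso : is_iso (coker Q) N beta).

Lemma lift_merge_induces c :
  is_lift P Q M N alpha beta f c -> induces (mp P) (mp Q) c.
Proof.
move=> c_lift; apply: induces_maps_rel; first exact: graded_mx_merge c_lift.1.
exact: maps_rel_merge (lift_maps_rel beta_iso P_gr c_lift).
Qed.

Lemma ind_merge_lift_unique c c' a y :
  is_lift P Q M N alpha beta f c -> is_lift P Q M N alpha beta f c' ->
  ind (mp P) (mp Q) c a y = ind (mp P) (mp Q) c' a y.
Proof.
move=> c_lift c'_lift; apply: ind_coker_null.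
exact: coker_null_merge (lift_diff_coker_null beta_iso c_lift c'_lift).
Qed.

End MergeLift.

Lemma ind_merge_lift_mul (M N L : pmod K R n) P Q S (alpha : forall a, coker P a -> M a)
    (beta : forall a, coker Q a -> N a) (gamma : forall a, coker S a -> L a)
    (f : forall a, M a -> N a) (g : forall a, N a -> L a) c e a y :
  graded_pres Q -> is_iso (coker S) L gamma ->
  is_lift P Q M N alpha beta f c -> is_lift Q S N L beta gamma g e ->
  ind (mp P) (mp S) (c *m e) a y = ind (mp Q) (mp S) e a (ind (mp P) (mp Q) c a y).
Proof.
(* [ng (mp P)] reduces to [ng P], which misleads unification: give the presentations. *)
move=> Q_gr gamma_iso c_lift e_lift; apply: (@ind_mul _ _ _ (mp P) (mp Q) (mp S)).
  exact: graded_mx_merge c_lift.1.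
exact: maps_rel_merge (lift_maps_rel gamma_iso Q_gr e_lift).
Qed.

Lemma ind_merge_lift_inv (M : pmod K R n) P Q (alpha : forall a, coker P a -> M a)
    (beta : forall a, coker Q a -> M a) c c' a y :
  presents P M alpha -> presents Q M beta ->
  is_lift P Q M M alpha beta (fun a x => x) c -> is_lift Q P M M beta alpha (fun a x => x) c' ->
  ind (mp Q) (mp P) c' a (ind (mp P) (mp Q) c a y) = y.
Proof.
move=> [_ alpha_iso] [Q_gr _] c_lift c'_lift.
rewrite -(ind_merge_lift_mul y Q_gr alpha_iso c_lift c'_lift).
by rewrite (ind_merge_lift_unique alpha_iso _ (lift_comp c_lift c'_lift) (lift1 alpha)) ind1.
Qed.

Lemma merge_coker_iso (M : pmod K R n) P Q (alpha : forall a, coker P a -> M a)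
    (beta : forall a, coker Q a -> M a) :
  presents P M alpha -> presents Q M beta -> pmod_iso (coker (mp P)) (coker (mp Q)).
Proof.
move=> presP presQ; have [P_gr alpha_iso] := presP; have [Q_gr beta_iso] := presQ.
have [c c_lift] := lift_exists beta_iso alpha_iso.1 (is_morph_id M).
have [c' c'_lift] := lift_exists alpha_iso beta_iso.1 (is_morph_id M).
exists (ind (mp P) (mp Q) c); split; first exact: (lift_merge_induces P_gr beta_iso c_lift).2.
exists (ind (mp Q) (mp P) c'); split; first exact: (lift_merge_induces Q_gr alpha_iso c'_lift).2.
- by move=> a y; apply: ind_merge_lift_inv presP presQ c_lift c'_lift.
- by move=> a y; apply: ind_merge_lift_inv presQ presP c'_lift c_lift.
Qed.

End MergeFunctor.

Theorem mainTheorem6 (K : fieldType) (R : realType) (n : nat)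
  (kk : 'I_n -> nat) (G : forall i : 'I_n, 'I_(kk i) -> R) (delta : R) :
  (forall i, 0 < kk i)%N ->
  delta_lt_half_ctrl G delta ->
  (* objects: M^G_delta(M) does not depend, up to isomorphism, on the presentation *)
  (forall (M : pmod K R n) (P Q : pres K R n)
          (alpha : forall a, coker P a -> M a) (beta : forall a, coker Q a -> M a),
     is_pmod M -> presents P M alpha -> presents Q M beta ->
     pmod_iso (coker (mpres G delta P)) (coker (mpres G delta Q)))
  /\
  (* morphisms: M^G_delta(f) is well defined *)
  (forall (M N : pmod K R n) (P Q : pres K R n)
          (alpha : forall a, coker P a -> M a) (beta : forall a, coker Q a -> N a)
          (f : forall a, M a -> N a),
     is_pmod M -> is_pmod N -> presents P M alpha -> presents Q N beta ->
     is_morph M N f ->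
     (exists c, is_lift P Q M N alpha beta f c) /\
     (forall c, is_lift P Q M N alpha beta f c ->
        graded_mx (gen (mpres G delta P)) (gen (mpres G delta Q)) c /\
        induces (mpres G delta P) (mpres G delta Q) c /\
        (forall c', is_lift P Q M N alpha beta f c' ->
           forall a y, ind (mpres G delta P) (mpres G delta Q) c a y
                       = ind (mpres G delta P) (mpres G delta Q) c' a y)))
  /\
  (* functoriality: identities *)
  (forall (M : pmod K R n) (P : pres K R n) (alpha : forall a, coker P a -> M a),
     is_pmod M -> presents P M alpha ->
     is_lift P P M M alpha alpha (fun a x => x) 1%:M /\
     (forall a y, ind (mpres G delta P) (mpres G delta P) 1%:M a y = y))
  /\
  (* functoriality: composition *)
  (forall (M N L : pmod K R n) (P Q S : pres K R n)
          (alpha : forall a, coker P a -> M a) (beta : forall a, coker Q a -> N a)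
          (gamma : forall a, coker S a -> L a)
          (f : forall a, M a -> N a) (g : forall a, N a -> L a)
          (c : 'M[K]_(ng P, ng Q)) (d : 'M[K]_(ng Q, ng S)),
     is_pmod M -> is_pmod N -> is_pmod L ->
     presents P M alpha -> presents Q N beta -> presents S L gamma ->
     is_morph M N f -> is_morph N L g ->
     is_lift P Q M N alpha beta f c -> is_lift Q S N L beta gamma g d ->
     is_lift P S M L alpha gamma (fun a x => g a (f a x)) (c *m d) /\
     (forall a y, ind (mpres G delta P) (mpres G delta S) (c *m d) a y
                  = ind (mpres G delta Q) (mpres G delta S) d a
                      (ind (mpres G delta P) (mpres G delta Q) c a y))).
Proof.
move=> kk_gt0 d_lt_half; split; [|split; [|split]].
- by move=> M P Q alpha beta _; apply: merge_coker_iso.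
- move=> M N P Q alpha beta f _ _ [P_gr alpha_iso] [_ beta_iso] f_morph.
  split; first exact: lift_exists beta_iso alpha_iso.1 f_morph.
  move=> c c_lift; split; first exact: graded_mx_merge c_lift.1.
  split; first exact: (lift_merge_induces kk_gt0 d_lt_half P_gr beta_iso c_lift).
  move=> c' c'_lift a y; exact: (ind_merge_lift_unique kk_gt0 d_lt_half beta_iso y c_lift c'_lift).
- by move=> M P alpha _ _; split; [exact: lift1 | exact: ind1].
move=> M N L P Q S alpha beta gamma f g c e _ _ _ _ [Q_gr _] [_ gamma_iso] _ _ c_lift e_lift.
split; first exact: lift_comp c_lift e_lift.
move=> a y; exact: (ind_merge_lift_mul kk_gt0 d_lt_half y Q_gr gamma_iso c_lift e_lift).
Qed.
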